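(* Let $\mu>0$ and $x_m\ge 0$. Let $g:[0,+\infty)\to(0,+\infty)$ be continuous and strictly decreasing with $g(+\infty)=0$, and let $\beta:[x_m,+\infty)\to[0,+\infty)$ be globally Lipschitz with $\beta(x)>0$ for almost every $x\in[x_0,+\infty)$, for some $x_0\ge x_m$ ($\beta$ is not assumed to be monotone). For $b\ge 0$ define $$R(b):=\int_0^\infty \beta\left( x_m + \int_0^a g\left( \frac{e^{-\mu\tau}}{\mu}b\right) d\tau \right) e^{-\mu a}\,da, \qquad F(b):=bR(b).$$ Then $F$ is strictly increasing on $[0,+\infty)$.
   Context: $F(b)$ coincides with the value of the functional $\phi\mapsto\int_0^\infty \beta\left( x_m + \int_0^a g\left( e^{-\mu(\tau -a)} \int_a^\infty e^{-\mu s} \phi(-s)\,ds \right) d\tau \right) e^{-\mu a} \phi(-a)\,da$ evaluated at the constant function $\phi\equiv b$; this functional defines the renewal equation $b(t)=\int_0^\infty \beta\left( x_m + \int_0^a g\left( e^{-\mu(\tau -a)} \int_a^\infty e^{-\mu s} b(t-s)\,ds \right) d\tau \right) e^{-\mu a} b(t-a)\,da$ modelling tree population birth rate, with $g$ the growth rate, $\beta$ the per capita reproduction rate, $\mu$ the death rate. *)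

From HB Require Import structures.
From mathcomp Require Import all_boot all_order all_algebra.
From mathcomp Require Import all_classical all_reals all_analysis.
Set Implicit Arguments. Unset Strict Implicit. Unset Printing Implicit Defensive.
Import Order.TTheory GRing.Theory Num.Theory.
Import numFieldNormedType.Exports.
Local Open Scope classical_set_scope.
Local Open Scope ring_scope.

Definition inner_size {R : realType} (mu : R) (g : R -> R) (b a : R) : R :=
  Rintegral lebesgue_measure `[(0:R), a]%classic
    (fun tau => g (expR (- (mu * tau)) / mu * b)).

(* R(b) = int_0^oo beta(x_m + inner) e^{-mu a} da, as an extended real
   (integrand is nonnegative, so the Lebesgue integral is always defined). *)
Definition Rfun {R : realType} (mu xm : R) (g beta : R -> R) (b : R) : \bar R :=
  (\int[lebesgue_measure]_(a in `[0%R, +oo[%classic)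
     (beta (xm + inner_size mu g b a) * expR (- (mu * a)))%:E)%E.

Definition Ffun {R : realType} (mu xm : R) (g beta : R -> R) (b : R) : \bar R :=
  (b%:E * Rfun mu xm g beta b)%E.

From HB Require Import structures.
From mathcomp Require Import all_boot all_order all_algebra.
From mathcomp Require Import all_classical all_reals all_analysis.
From mathcomp Require Import ring lra measurable_realfun.
Import Order.TTheory GRing.Theory Num.Theory.
Import numFieldNormedType.Exports.
Local Open Scope classical_set_scope.
Local Open Scope ring_scope.

Set Implicit Arguments.
Unset Strict Implicit.
Unset Printing Implicit Defensive.

(* Write z_b(t) = e^{-mu t} b / mu for the environment at age t and
   S_b(a) = \int_0^a g(z_b(t)) dt for the growth up to age a.  The substitution
   x = xm + S_b(a), with dx = g(z_b(a)) da and b e^{-mu a} = mu z_b(a), gives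
     F(b) = \int_xm^oo beta(x) w(Z_b(x - xm)) dx,      w(z) = mu z / g(z),
   where Z_b(y) = z_b(S_b^{-1}(y)) is the environment met when the growth
   reaches y (z_b = env b, S_b = inner_size mu g b,
   Z_b = env_at_size b, w = env_weight).  For b1 < b2 the environment under b2
   is the one under b1 delayed by s = ln(b2/b1)/mu, hence
   S_b2(a + s) = S_b2(s) + S_b1(a): the growth y is reached under b2 at an age
   a2 < S_b1^{-1}(y) + s, so Z_b1(y) < Z_b2(y).  Since g decreases, w is
   strictly increasing, and F(b2) - F(b1) = \int beta (w o Z_b2 - w o Z_b1) > 0
   because beta > 0 almost everywhere on a half-line; F(b1) is finite since
   beta grows at most linearly. *)

Lemma lipschitz_continuous (R : realFieldType) (V W : normedModType R)
    (f : V -> W) (k : R) :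
  (forall x y, `|f x - f y| <= k * `|x - y|) -> continuous f.
Proof.
move=> f_lip x; apply/cvgrPdist_lt => e e_gt0.
have k1_gt0 : 0 < `|k| + 1 by rewrite ltr_wpDl.
near=> y; apply: (le_lt_trans (f_lip x y)).
apply: (@le_lt_trans _ _ ((`|k| + 1) * `|x - y|)).
  by rewrite ler_wpM2r // (le_trans (ler_norm k)) // lerDl.
rewrite mulrC -ltr_pdivlMr //; near: y.
by apply: (@cvgr_dist_lt _ _ _ (nbhs x) _ id) => //; rewrite divr_gt0.
Unshelve. all: by end_near. Qed.

Lemma ler_dist_max (R : realDomainType) (x y c : R) :
  `|Num.max x c - Num.max y c| <= `|x - y|.
Proof.
case: (leP x c) => xc; case: (leP y c) => yc.
- by rewrite subrr normr0.
- by rewrite !ler0_norm ?subr_le0; lra.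
- by rewrite !ger0_norm ?subr_ge0; lra.
- exact: lexx.
Qed.

Lemma mulr_expRN_le (R : realType) (k a : R) :
  0 < k -> a * expR (- (k * a)) <= k^-1.
Proof.
move=> k_gt0; rewrite -(ler_pM2l k_gt0) mulfV ?gt_eqF // mulrA.
rewrite -(expRxMexpNx_1 (k * a)) ler_wpM2r ?expR_ge0 //.
by have := expR_ge1Dx (k * a); lra.
Qed.

Lemma continuous_EFin_measurable (R : realType) (D : set R) (f : R -> R) :
  continuous f -> measurable_fun D (EFin \o f).
Proof.
move=> f_cont; apply/measurable_EFinP; apply: measurable_funTS.
exact: continuous_measurable_fun.
Qed.

Lemma continuous_integrable (R : realType) (A : set R) (f : R -> R) :
  continuous f -> compact A -> lebesgue_measure.-integrable A (EFin \o f).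
Proof.
move=> f_cont A_compact; apply: continuous_compact_integrable => //.
exact: continuous_subspaceT.
Qed.

Lemma Rintegral_cst_itv_oc (R : realType) (c a1 a2 : R) : a1 <= a2 ->
  \int[lebesgue_measure]_(t in `]a1, a2]) c = c * (a2 - a1).
Proof.
move=> a12; rewrite Rintegral_cst //.
have := lebesgue_measure_itv `]a1, a2]; rewrite /= => ->; rewrite lte_fin.
case: ltP => [_|a21]; first by rewrite -EFinB.
have -> : a2 = a1 by apply/le_anti/andP.
by rewrite subrr mulr0.
Qed.

Section SizeDependentRenewal.
Variables (R : realType) (mu xm : R) (g : R -> R).
Hypothesis mu_gt0 : 0 < mu.
Hypothesis g_cont : {within `[0%R, +oo[, continuous g}.
Hypothesis g_gt0 : forall x : R, 0 <= x -> 0 < g x.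
Hypothesis g_decr : forall x y : R, 0 <= x -> x < y -> g y < g x.

Lemma continuous_g x : 0 < x -> {for x, continuous g}.
Proof.
move=> x_gt0; have [+ _] := (continuous_within_itvcyP 0 g).1 g_cont.
by apply; rewrite in_itv /= x_gt0.
Qed.

Lemma g_cvg0r : g x @[x --> 0^'+] --> g 0.
Proof. by have [_ +] := (continuous_within_itvcyP 0 g).1 g_cont. Qed.

Lemma g_le x y : 0 <= x -> x <= y -> g y <= g x.
Proof.
move=> x_ge0; rewrite le_eqVlt => /predU1P[-> //|xy].
exact/ltW/g_decr.
Qed.

Definition env (b t : R) := expR (- (mu * t)) / mu * b.

Definition growth (b t : R) := g (env b t).

Definition env_weight (z : R) := mu * z / g z.

Definition age_at_size (b y : R) :=
  xget 0 [set a | 0 <= a /\ inner_size mu g b a = y].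

Definition env_at_size (b y : R) := env b (age_at_size b y).

Definition size_at_age (b a : R) := xm + inner_size mu g b a.

Definition size_weight (b x : R) := env_weight (env_at_size b (x - xm)).

Lemma continuous_env b : continuous (env b).
Proof.
move=> t; apply: cvgM; last exact: cvg_cst.
apply: cvgM; last exact: cvg_cst.
apply: continuous_comp; last exact: continuous_expR.
by apply: cvgN; apply: cvgM; [exact: cvg_cst|exact: cvg_id].
Qed.

Lemma env_cvgy b : env b t @[t --> +oo] --> 0.
Proof.
rewrite -(mul0r b) -(mul0r mu^-1).
apply: cvgM; last exact: cvg_cst.
apply: cvgM; last exact: cvg_cst.
rewrite (_ : (fun t => _) = (fun z => expR (- z)) \o ( *%R mu)) //.
apply: (@cvg_comp _ _ _ _ _ _ (pinfty_nbhs R)); last exact: cvgr_expR.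
by apply: gt0_cvgMry => //; exact: cvg_id.
Qed.

Lemma env_ltr b t1 t2 : 0 < b -> t1 < t2 -> env b t2 < env b t1.
Proof.
move=> b_gt0 t12; rewrite /env -!mulrA ltr_pM2r ?mulr_gt0 ?invr_gt0 //.
by rewrite ltr_expR ltrN2 ltr_pM2l.
Qed.

Lemma env_shift b1 b2 t : 0 < b1 -> 0 < b2 ->
  env b2 (t + ln (b2 / b1) / mu) = env b1 t.
Proof.
move=> b1_gt0 b2_gt0; rewrite /env mulrDr opprD expRD.
have -> : mu * (ln (b2 / b1) / mu) = ln (b2 / b1).
  by rewrite mulrC divfK ?gt_eqF.
rewrite [expR (- ln _)]expRN lnK ?posrE ?divr_gt0 //.
by field; rewrite !gt_eqF.
Qed.

Lemma continuous_env_weight z : 0 < z -> {for z, continuous env_weight}.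
Proof.
move=> z_gt0; apply: cvgM.
  by apply: cvgM; [exact: cvg_cst|exact: cvg_id].
apply: cvgV; first by rewrite gt_eqF // g_gt0 // ltW.
exact: continuous_g.
Qed.

Lemma env_weight_gt0 z : 0 < z -> 0 < env_weight z.
Proof.
by move=> z_gt0; rewrite /env_weight divr_gt0 ?mulr_gt0 // g_gt0 // ltW.
Qed.

Lemma env_weight_ltr z1 z2 : 0 < z1 -> z1 < z2 -> env_weight z1 < env_weight z2.
Proof.
move=> z1_gt0 z12; have z2_gt0 := lt_trans z1_gt0 z12.
have g1_gt0 : 0 < g z1 by apply/g_gt0/ltW.
have g2_gt0 : 0 < g z2 by apply/g_gt0/ltW.
rewrite /env_weight -!mulrA ltr_pM2l //.
apply: (@lt_le_trans _ _ (z2 / g z1)); first by rewrite ltr_pM2r ?invr_gt0.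
by rewrite ler_pM2l // lef_pV2 ?posrE // ltW // g_decr // ltW.
Qed.

Section FixedBirthRate.
Context {b : R} (b_gt0 : 0 < b).

Local Notation S := (inner_size mu g b).
Local Notation gmin := (g (b / mu)).

Lemma env_gt0 t : 0 < env b t.
Proof. by rewrite /env mulr_gt0 // divr_gt0 // expR_gt0. Qed.

Lemma env_le t : 0 <= t -> env b t <= b / mu.
Proof.
move=> t_ge0; rewrite /env mulrAC -mulrA ler_piMl //.
  by rewrite divr_ge0 // ltW.
by rewrite expR_le1 oppr_le0 mulr_ge0 // ltW.
Qed.

Lemma continuous_growth : continuous (growth b).
Proof.
move=> t; apply: continuous_comp; first exact: continuous_env.
exact/continuous_g/env_gt0.
Qed.

Lemma gmin_gt0 : 0 < gmin.
Proof. by apply: g_gt0; rewrite divr_ge0 // ltW. Qed.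

Lemma growth_ge t : 0 <= t -> gmin <= growth b t.
Proof. by move=> t_ge0; apply: g_le; [exact/ltW/env_gt0|exact: env_le]. Qed.

Lemma growth_le t : growth b t <= g 0.
Proof. exact/g_le/ltW/env_gt0. Qed.

Lemma growth_cvgy : growth b t @[t --> +oo] --> g 0.
Proof.
apply/cvgrPdist_lt => e e_gt0.
have /cvgrPdist_lt/(_ e e_gt0) g_near0 := g_cvg0r.
have env_near : \forall t \near +oo, 0 < env b t -> `|g 0 - growth b t| < e.
  exact: env_cvgy g_near0.
by near=> t; apply: (near env_near t) => //; exact: env_gt0.
Unshelve. all: by end_near. Qed.

Lemma inner_sizeB a1 a2 : 0 <= a1 -> a1 <= a2 ->
  S a2 - S a1 = \int[lebesgue_measure]_(t in `]a1, a2]) growth b t.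
Proof.
move=> a1_ge0 a12; apply: Rintegral_itvB; rewrite ?bnd_simp //.
exact/continuous_integrable/segment_compact/continuous_growth.
Qed.

Lemma inner_sizeB_bounds a1 a2 : 0 <= a1 -> a1 <= a2 ->
  gmin * (a2 - a1) <= S a2 - S a1 <= g 0 * (a2 - a1).
Proof.
move=> a1_ge0 a12; rewrite inner_sizeB // -!Rintegral_cst_itv_oc //.
have int_oc f : continuous f ->
    lebesgue_measure.-integrable `]a1, a2] (EFin \o f).
  move=> f_cont; have oc_sub : `]a1, a2] `<=` `[0, a2].
    by apply: subset_itvr; rewrite bnd_simp.
  have := continuous_integrable f_cont (@segment_compact _ 0 a2).
  exact: integrableS.
have int_cst c : lebesgue_measure.-integrable `]a1, a2] (EFin \o fun=> c).
  by apply: int_oc => x; exact: cvg_cst.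
have int_growth := int_oc _ continuous_growth.
apply/andP; split; apply: le_Rintegral => //.
  move=> t; rewrite /= in_itv /= => /andP[a1t _].
  exact/growth_ge/(le_trans a1_ge0)/ltW.
by move=> t _; exact: growth_le.
Qed.

Lemma inner_size_le0 a : a <= 0 -> S a = 0.
Proof.
rewrite le_eqVlt => /predU1P[->|a_lt0]; rewrite /inner_size.
  by rewrite set_itv1 Rintegral_set1.
by rewrite set_itv_ge ?Rintegral_set0 // bnd_simp -ltNge.
Qed.

Lemma inner_size_max0 a : S (Num.max a 0) = S a.
Proof.
by case: (leP a 0) => // a_le0; rewrite !inner_size_le0.
Qed.

Lemma inner_size_ge_lin a : 0 <= a -> gmin * a <= S a.
Proof.
move=> a_ge0; have /andP[+ _] := inner_sizeB_bounds (lexx 0) a_ge0.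
by rewrite (inner_size_le0 (lexx 0)) !subr0.
Qed.

Lemma inner_size_ge0 a : 0 <= S a.
Proof.
have a0_ge0 : 0 <= Num.max a 0 by rewrite le_max lexx orbT.
rewrite -inner_size_max0; apply: le_trans (inner_size_ge_lin a0_ge0).
by rewrite mulr_ge0 // ltW // gmin_gt0.
Qed.

Lemma inner_size_ltr a1 a2 : 0 <= a1 -> a1 < a2 -> S a1 < S a2.
Proof.
move=> a1_ge0 a12; have /andP[lb _] := inner_sizeB_bounds a1_ge0 (ltW a12).
by rewrite -subr_gt0 (lt_le_trans _ lb) // mulr_gt0 ?subr_gt0 ?gmin_gt0.
Qed.

Lemma inner_size_ler a1 a2 : 0 <= a1 -> a1 <= a2 -> S a1 <= S a2.
Proof.
move=> a1_ge0 a12; have /andP[lb _] := inner_sizeB_bounds a1_ge0 a12.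
by rewrite -subr_ge0 (le_trans _ lb) // mulr_ge0 ?subr_ge0 // ltW // gmin_gt0.
Qed.

Lemma inner_size_lipschitz x y : `|S x - S y| <= g 0 * `|x - y|.
Proof.
rewrite -(inner_size_max0 x) -(inner_size_max0 y).
apply: le_trans (ler_wpM2l (ltW (g_gt0 (lexx 0))) (ler_dist_max x y 0)).
wlog xy : x y / Num.max x 0 <= Num.max y 0.
  move=> wlog_xy; case: (leP (Num.max x 0) (Num.max y 0)) => [|/ltW yx].
    exact: wlog_xy.
  by rewrite distrC (distrC (Num.max x 0)); exact: wlog_xy.
have x_ge0 : 0 <= Num.max x 0 by rewrite le_max lexx orbT.
have /andP[lb ub] := inner_sizeB_bounds x_ge0 xy.
have gmin_ge0 : 0 <= gmin by rewrite ltW // gmin_gt0.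
rewrite distrC ger0_norm; last by rewrite (le_trans _ lb) // mulr_ge0 ?subr_ge0.
by rewrite distrC ger0_norm ?subr_ge0.
Qed.

Lemma continuous_inner_size : continuous S.
Proof. exact: lipschitz_continuous inner_size_lipschitz. Qed.

Lemma is_derive_inner_size (a : R) : 0 < a -> is_derive a 1 S (growth b a).
Proof.
move=> a_gt0; have a_lt : a < a + 1 by rewrite ltrDl.
have [S_derivable S'] := continuous_FTC1_closed a_lt
  (continuous_integrable continuous_growth (@segment_compact _ 0 (a + 1)))
  a_gt0 (@continuous_growth a).
by apply: DeriveDef; [exact: S_derivable|rewrite -derive1E].
Qed.

Lemma age_at_sizeP y :
  0 <= y -> 0 <= age_at_size b y /\ S (age_at_size b y) = y.
Proof.
move=> y_ge0; apply: (xgetPex 0 (P := [set a | 0 <= a /\ S a = y])).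
have A_ge0 : 0 <= y / gmin by rewrite divr_ge0 // ltW // gmin_gt0.
have y_le : y <= S (y / gmin).
  by have := inner_size_ge_lin A_ge0; rewrite mulrC divfK // gt_eqF // gmin_gt0.
have S_cont : {within `[0, y / gmin], continuous S}.
  exact: continuous_subspaceT continuous_inner_size.
have [a] : exists2 a, a \in `[0, y / gmin] & S a = y.
  apply: IVT A_ge0 S_cont _.
  by rewrite ge_min (inner_size_le0 (lexx 0)) y_ge0 le_max y_le orbT.
by rewrite in_itv /= => /andP[a_ge0 _] Sa; exists a.
Qed.

Lemma age_at_size_lt0 y : y < 0 -> age_at_size b y = 0.
Proof.
move=> y_lt0; apply: xgetPN => a [_ Sa].
by have := inner_size_ge0 a; rewrite Sa leNgt y_lt0.
Qed.

Lemma inner_sizeK a : 0 <= a -> age_at_size b (S a) = a.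
Proof.
move=> a_ge0; have [age_ge0 ageK] := age_at_sizeP (inner_size_ge0 a).
apply/eqP; rewrite eq_le !leNgt; apply/andP; split; apply/negP.
  by move=> /(inner_size_ltr a_ge0); rewrite ageK ltxx.
by move=> /(inner_size_ltr age_ge0); rewrite ageK ltxx.
Qed.

Lemma age_at_size_max0 y : age_at_size b (Num.max y 0) = age_at_size b y.
Proof.
case: (leP y 0) => // y_le0; case: (ltP y 0) => [/age_at_size_lt0 ->|y_ge0].
  by rewrite -{1}(inner_size_le0 (lexx 0)) inner_sizeK.
by have -> : y = 0 by apply/le_anti/andP.
Qed.

Lemma age_at_size_lipschitz y1 y2 :
  `|age_at_size b y1 - age_at_size b y2| <= gmin^-1 * `|y1 - y2|.
Proof.
have gmin_inv_ge0 : 0 <= gmin^-1 by rewrite invr_ge0 ltW // gmin_gt0.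
have max0_ge0 (y : R) : 0 <= Num.max y 0 by rewrite le_max lexx orbT.
rewrite -(age_at_size_max0 y1) -(age_at_size_max0 y2).
apply: le_trans (ler_wpM2l gmin_inv_ge0 (ler_dist_max y1 y2 0)).
move: (max0_ge0 y1) (max0_ge0 y2); move: (Num.max y1 0) (Num.max y2 0).
move=> {}y1 {}y2; wlog y12 : y1 y2 / y1 <= y2.
  move=> wlog_y y1_ge0 y2_ge0; case: (leP y1 y2) => [y12|/ltW y21].
    exact: wlog_y.
  by rewrite distrC (distrC y1); exact: wlog_y.
move=> y1_ge0 y2_ge0.
have [a1_ge0 Sa1] := age_at_sizeP y1_ge0.
have [a2_ge0 Sa2] := age_at_sizeP y2_ge0.
have a12 : age_at_size b y1 <= age_at_size b y2.
  rewrite leNgt; apply/negP => /(inner_size_ltr a2_ge0).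
  by rewrite Sa1 Sa2 ltNge y12.
have /andP[+ _] := inner_sizeB_bounds a1_ge0 a12; rewrite Sa1 Sa2 => lb.
rewrite distrC ger0_norm ?subr_ge0 // distrC ger0_norm ?subr_ge0 //.
by rewrite ler_pdivlMl // gmin_gt0.
Qed.

Lemma continuous_age_at_size : continuous (age_at_size b).
Proof. exact: lipschitz_continuous age_at_size_lipschitz. Qed.

Lemma env_at_sizeE a : 0 <= a -> env_at_size b (S a) = env b a.
Proof. by move=> a_ge0; rewrite /env_at_size inner_sizeK. Qed.

Lemma continuous_env_at_size : continuous (env_at_size b).
Proof.
move=> y; apply: (continuous_comp (f := age_at_size b) (g := env b)).
  exact: continuous_age_at_size.
exact: continuous_env.
Qed.

Lemma continuous_size_weight : continuous (size_weight b).
Proof.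
move=> x; apply: (continuous_comp (f := env_at_size b \o (fun x => x - xm))
  (g := env_weight)); last exact/continuous_env_weight/env_gt0.
apply: continuous_comp; last exact: continuous_env_at_size.
by apply: cvgB; [exact: cvg_id|exact: cvg_cst].
Qed.

Lemma size_weight_gt0 x : 0 < size_weight b x.
Proof. exact/env_weight_gt0/env_gt0. Qed.

Lemma size_weight_growth a : 0 <= a ->
  size_weight b (size_at_age b a) * growth b a = b * expR (- (mu * a)).
Proof.
move=> a_ge0; rewrite /size_weight /size_at_age addrC addKr env_at_sizeE //.
rewrite /env_weight /growth /env; field.
by rewrite !gt_eqF // g_gt0 // ltW // env_gt0.
Qed.

Lemma size_at_age_ltr : {in `[0, +oo[ &, {homo size_at_age b : x y / x < y}}.
Proof.
move=> x y; rewrite !in_itv /= !andbT => x_ge0 _ xy.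
by rewrite ltrD2l inner_size_ltr.
Qed.

Lemma continuous_size_at_age : continuous (size_at_age b).
Proof.
by move=> a; apply: cvgD; [exact: cvg_cst|exact: continuous_inner_size].
Qed.

Lemma is_derive_size_at_age (a : R) :
  0 < a -> is_derive a 1 (size_at_age b) (growth b a).
Proof.
move=> a_gt0.
have := is_deriveD (is_derive_cst xm a 1) (is_derive_inner_size a_gt0).
by rewrite add0r.
Qed.

Lemma derive1_size_at_age (a : R) :
  0 < a -> derive1 (size_at_age b) a = growth b a.
Proof.
move=> a_gt0; rewrite derive1E; apply: derive_val.
exact: is_derive_size_at_age.
Qed.

Lemma continuous_derive1_size_at_age :
  {in `]0, +oo[, continuous (derive1 (size_at_age b))}.
Proof.
move=> a; rewrite in_itv /= andbT => a_gt0.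
rewrite /continuous_at derive1_size_at_age //.
apply: (cvg_trans _ (@continuous_growth a)); apply: near_eq_cvg.
by near=> t; rewrite derive1_size_at_age //; near: t; exact: lt_nbhsr.
Unshelve. all: by end_near. Qed.

Lemma cvg_derive1_size_at_age0 : cvg (derive1 (size_at_age b) a @[a --> 0^'+]).
Proof.
apply/cvg_ex; exists (growth b 0).
apply: (cvg_trans _ (cvg_at_right_filter (@continuous_growth 0))).
by apply: near_eq_cvg; near=> a; rewrite derive1_size_at_age.
Unshelve. all: by end_near. Qed.

Lemma cvg_derive1_size_at_agey : cvg (derive1 (size_at_age b) a @[a --> +oo]).
Proof.
apply/cvg_ex; exists (g 0); apply: (cvg_trans _ growth_cvgy).
by apply: near_eq_cvg; near=> a; rewrite derive1_size_at_age.
Unshelve. all: by end_near. Qed.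

Lemma size_at_age_derivable_oy : derivable_oy_Rcontinuous (size_at_age b) 0.
Proof.
split; last exact: cvg_at_right_filter (@continuous_size_at_age 0).
by move=> a; rewrite in_itv /= andbT => /is_derive_size_at_age [].
Qed.

Lemma size_at_age_cvgy : size_at_age b a @[a --> +oo] --> +oo.
Proof.
apply/cvgryPge => A; near=> a.
have a_ge0 : 0 <= a by near: a; apply: nbhs_pinfty_ge; exact: num_real.
have : (A - xm) / gmin <= a by near: a; apply: nbhs_pinfty_ge; exact: num_real.
have := inner_size_ge_lin a_ge0; have := gmin_gt0.
by rewrite /size_at_age ler_pdivrMr ?gmin_gt0 //; nra.
Unshelve. all: by end_near. Qed.

End FixedBirthRate.

Lemma inner_size_shift b1 b2 a : 0 < b1 -> b1 <= b2 -> 0 <= a ->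
  inner_size mu g b2 (a + ln (b2 / b1) / mu) =
  inner_size mu g b2 (ln (b2 / b1) / mu) + inner_size mu g b1 a.
Proof.
move=> b1_gt0 b12; have b2_gt0 := lt_le_trans b1_gt0 b12.
have s_ge0 : 0 <= ln (b2 / b1) / mu.
  by rewrite divr_ge0 ?(ltW mu_gt0) // ln_ge0 // ler_pdivlMr // mul1r.
have env_s t : env b2 (t + ln (b2 / b1) / mu) = env b1 t by exact: env_shift.
pose D a :=
  (inner_size mu g b2 \o shift (ln (b2 / b1) / mu)) a - inner_size mu g b1 a.
rewrite le_eqVlt => /predU1P[<-|a_gt0].
  by rewrite add0r (inner_size_le0 (lexx 0)) addr0.
have D_cont : continuous D.
  move=> x; apply: cvgB; last exact: continuous_inner_size.
  apply: continuous_comp; last exact: continuous_inner_size.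
  by apply: cvgD; [exact: cvg_id|exact: cvg_cst].
have D'0 x : x \in `]0, a[ -> is_derive x 1 D 0.
  rewrite in_itv /= => /andP[x_gt0 _].
  have S2' : is_derive x 1 (inner_size mu g b2 \o shift (ln (b2 / b1) / mu))
      (growth b2 (x + ln (b2 / b1) / mu) * 1).
    apply: is_derive1_comp; last exact: is_derive_shift.
    by apply: is_derive_inner_size; rewrite // ltr_pwDl.
  have := is_deriveB S2' (is_derive_inner_size b1_gt0 x_gt0).
  by rewrite mulr1 /growth env_s subrr.
have [c _] := MVT (df := fun=> 0) a_gt0 D'0 (continuous_subspaceT D_cont).
rewrite mul0r => /eqP; rewrite subr_eq0 /D /= add0r (inner_size_le0 (lexx 0)).
by rewrite subr0 => /eqP <-; rewrite subrK.
Qed.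

Lemma env_at_size_ltr b1 b2 y : 0 < b1 -> b1 < b2 -> 0 <= y ->
  env_at_size b1 y < env_at_size b2 y.
Proof.
move=> b1_gt0 b12 y_ge0; have b2_gt0 := lt_trans b1_gt0 b12.
have s_gt0 : 0 < ln (b2 / b1) / mu.
  by rewrite divr_gt0 // ln_gt0 // ltr_pdivlMr // mul1r.
have S2s_gt0 : 0 < inner_size mu g b2 (ln (b2 / b1) / mu).
  by have := inner_size_ltr b2_gt0 (lexx 0) s_gt0; rewrite inner_size_le0.
have [a1_ge0 Sa1] := age_at_sizeP b1_gt0 y_ge0.
have [a2_ge0 Sa2] := age_at_sizeP b2_gt0 y_ge0.
rewrite /env_at_size -(env_shift _ b1_gt0 b2_gt0); apply: env_ltr => //.
rewrite ltNge; apply/negP => a2_ge.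
have := inner_size_ler b2_gt0 (addr_ge0 a1_ge0 (ltW s_gt0)) a2_ge.
by rewrite Sa2 (inner_size_shift b1_gt0 (ltW b12) a1_ge0) Sa1; lra.
Qed.

Lemma size_weight_ltr b1 b2 x : 0 < b1 -> b1 < b2 -> xm <= x ->
  size_weight b1 x < size_weight b2 x.
Proof.
move=> b1_gt0 b12 x_ge; apply: env_weight_ltr; first exact: env_gt0.
by apply: env_at_size_ltr; rewrite ?subr_ge0.
Qed.

Variables (beta : R -> R) (L : R).
Hypothesis beta_ge0 : forall x : R, xm <= x -> 0 <= beta x.
Hypothesis beta_lip : forall x y : R, xm <= x -> xm <= y ->
  `|beta x - beta y| <= L * `|x - y|.

Definition beta_ext (x : R) := beta (Num.max x xm).

Lemma beta_ext_lipschitz x y : `|beta_ext x - beta_ext y| <= `|L| * `|x - y|.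
Proof.
rewrite /beta_ext (le_trans (beta_lip _ _)) ?le_max ?lexx ?orbT //.
apply: le_trans (ler_wpM2l (normr_ge0 L) (ler_dist_max x y xm)).
by rewrite ler_wpM2r // ler_norm.
Qed.

Lemma continuous_beta_ext : continuous beta_ext.
Proof. exact: lipschitz_continuous beta_ext_lipschitz. Qed.

Lemma beta_ext_ge0 x : 0 <= beta_ext x.
Proof. by apply: beta_ge0; rewrite le_max lexx orbT. Qed.

Lemma beta_extE x : xm <= x -> beta_ext x = beta x.
Proof. by move=> x_ge; rewrite /beta_ext max_l. Qed.

Lemma beta_ext_size_le b a : 0 < b -> 0 <= a ->
  beta_ext (size_at_age b a) <= beta_ext xm + `|L| * g 0 * a.
Proof.
move=> b_gt0 a_ge0; rewrite /size_at_age.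
have S_le : inner_size mu g b a <= g 0 * a.
  have /andP[_] := inner_sizeB_bounds b_gt0 (lexx 0) a_ge0.
  by rewrite (inner_size_le0 (lexx 0)) !subr0.
have := beta_ext_lipschitz (xm + inner_size mu g b a) xm.
rewrite addrAC subrr add0r (ger0_norm (inner_size_ge0 b_gt0 a)).
have := ler_norm (beta_ext (xm + inner_size mu g b a) - beta_ext xm).
have := ler_wpM2l (normr_ge0 L) S_le.
by rewrite mulrA; lra.
Qed.

Definition offspring_rate (b a : R) :=
  beta_ext (size_at_age b a) * expR (- (mu * a)).

Definition Ffun_density (b x : R) := beta_ext x * size_weight b x.

Lemma offspring_rate_ge0 b a : 0 <= offspring_rate b a.
Proof. by rewrite /offspring_rate mulr_ge0 ?beta_ext_ge0 ?expR_ge0. Qed.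

Lemma continuous_offspring_rate b : 0 < b -> continuous (offspring_rate b).
Proof.
move=> b_gt0 a; apply: cvgM.
  apply: (continuous_comp (f := size_at_age b) (g := beta_ext)).
    exact: continuous_size_at_age.
  exact: continuous_beta_ext.
apply: continuous_comp; last exact: continuous_expR.
by apply: cvgN; apply: cvgM; [exact: cvg_cst|exact: cvg_id].
Qed.

Lemma Ffun_density_ge0 b x : 0 < b -> 0 <= Ffun_density b x.
Proof.
by move=> b_gt0; rewrite mulr_ge0 ?beta_ext_ge0 // ltW // size_weight_gt0.
Qed.

Lemma continuous_Ffun_density b : 0 < b -> continuous (Ffun_density b).
Proof.
move=> b_gt0 x; apply: cvgM; first exact: continuous_beta_ext.
exact: continuous_size_weight.
Qed.

Lemma Ffun_density_substitution b a : 0 < b -> 0 < a ->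
  ((Ffun_density b \o size_at_age b) * derive1 (size_at_age b)) a =
  b * offspring_rate b a.
Proof.
move=> b_gt0 a_gt0; rewrite !fctE derive1_size_at_age // /Ffun_density -mulrA.
by rewrite size_weight_growth ?(ltW a_gt0) // /offspring_rate mulrCA.
Qed.

Lemma RfunE b : 0 < b -> Rfun mu xm g beta b =
  (\int[lebesgue_measure]_(a in `[0%R, +oo[) (offspring_rate b a)%:E)%E.
Proof.
move=> b_gt0; apply: eq_integral => a _.
by rewrite /offspring_rate beta_extE // /size_at_age lerDl inner_size_ge0.
Qed.

Lemma FfunE b : 0 < b -> Ffun mu xm g beta b =
  (\int[lebesgue_measure]_(x in `[xm, +oo[) (Ffun_density b x)%:E)%E.
Proof.
move=> b_gt0; rewrite /Ffun RfunE // -ge0_integralZl_EFin //; first last.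
- exact: ltW.
- exact: continuous_EFin_measurable (continuous_offspring_rate b_gt0).
- by move=> a _; rewrite lee_fin offspring_rate_ge0.
have size0 : size_at_age b 0 = xm by rewrite /size_at_age inner_size_le0 ?addr0.
have := increasing_ge0_integration_by_substitutiony (size_at_age_ltr b_gt0)
  (continuous_derive1_size_at_age b_gt0) (cvg_derive1_size_at_age0 b_gt0)
  (cvg_derive1_size_at_agey b_gt0) (size_at_age_derivable_oy b_gt0)
  (size_at_age_cvgy b_gt0)
  (continuous_subspaceT (continuous_Ffun_density b_gt0))
  (fun x _ => Ffun_density_ge0 x b_gt0).
rewrite size0 => ->.
have meas_rate :
    measurable_fun `](0 : R), +oo[ (EFin \o (fun a => b * offspring_rate b a)).
  apply: continuous_EFin_measurable => a.
  by apply: cvgM; [exact: cvg_cst|exact: continuous_offspring_rate].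
(* [derive1 (size_at_age b)] is only known to be [growth b] away from 0 *)
rewrite -[LHS]integral_itv_obnd_cbnd // -[RHS]integral_itv_obnd_cbnd.
  apply: eq_integral => a; rewrite inE /= in_itv /= andbT => a_gt0.
  by rewrite Ffun_density_substitution.
apply: eq_measurable_fun meas_rate => a.
rewrite inE /= in_itv /= andbT => a_gt0.
by rewrite /= Ffun_density_substitution.
Qed.

Lemma offspring_rate_le_exponential b : 0 < b -> exists2 C, 0 <= C &
  forall a, 0 <= a -> offspring_rate b a <= C * exponential_pdf (mu / 2) a.
Proof.
move=> b_gt0; have k_gt0 : 0 < mu / 2 by rewrite divr_gt0.
set k := mu / 2 in k_gt0 *; set A := beta_ext xm; set B := `|L| * g 0.
have A_ge0 : 0 <= A := beta_ext_ge0 xm.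
have B_ge0 : 0 <= B by rewrite mulr_ge0 // ltW // g_gt0.
have k_ge0 := ltW k_gt0.
exists ((A + B / k) / k); first by rewrite divr_ge0 // addr_ge0 // divr_ge0.
move=> a a_ge0; rewrite /offspring_rate exponential_pdfE // mulNr.
have -> : expR (- (mu * a)) = expR (- (k * a)) * expR (- (k * a)).
  by rewrite -expRD; congr expR; rewrite /k; field.
set E := expR (- (k * a)).
have -> : (A + B / k) / k * (k * E) = (A + B / k) * E by field; rewrite gt_eqF.
have E_ge0 : 0 <= E := expR_ge0 _.
rewrite mulrA ler_wpM2r //.
have E_le1 : E <= 1 by rewrite expR_le1 oppr_le0 mulr_ge0.
have aE_le : a * E <= k^-1 by exact: mulr_expRN_le.
apply: le_trans (ler_wpM2r E_ge0 (beta_ext_size_le b_gt0 a_ge0)) _.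
rewrite -/A -/B mulrDl -mulrA lerD //; first by rewrite ler_piMr.
exact: ler_wpM2l aE_le.
Qed.

Lemma Rfun_lt_pinfty b : 0 < b -> (Rfun mu xm g beta b < +oo)%E.
Proof.
move=> b_gt0; have [C C_ge0 rate_le] := offspring_rate_le_exponential b_gt0.
have k_gt0 : 0 < mu / 2 by rewrite divr_gt0.
have pdf_meas : measurable_fun setT (EFin \o exponential_pdf (mu / 2)).
  by apply/measurable_EFinP; exact: measurable_exponential_pdf.
have pdf_ge0 x : (0 <= (exponential_pdf (mu / 2) x)%:E)%E.
  by rewrite lee_fin exponential_pdf_ge0 // ltW.
rewrite RfunE //; apply: (@le_lt_trans _ _
    (\int[lebesgue_measure]_(a in `[0%R, +oo[)
      (C%:E * (exponential_pdf (mu / 2) a)%:E))%E).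
  apply: ge0_le_integral => //.
  - by move=> a _; rewrite lee_fin offspring_rate_ge0.
  - exact: continuous_EFin_measurable (continuous_offspring_rate b_gt0).
  - by apply: emeasurable_funM; [exact: measurable_cst|exact: measurable_funTS].
  - move=> a; rewrite /= in_itv /= andbT => a_ge0.
    by rewrite -EFinM lee_fin rate_le.
rewrite ge0_integralZl_EFin //; last exact: measurable_funTS.
apply: lte_mul_pinfty; [by rewrite lee_fin|by []|].
apply: (@le_lt_trans _ _
    (\int[lebesgue_measure]_x (exponential_pdf (mu / 2) x)%:E)%E).
  by apply: ge0_subset_integral => // x _; exact: pdf_ge0.
by rewrite integral_exponential_pdf // ltry.
Qed.

Variable x0 : R.
Hypothesis xm_le_x0 : xm <= x0.
Hypothesis beta_gt0_ae :
  lebesgue_measure.-negligible [set x | x0 <= x /\ beta x <= 0].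

Lemma integral_beta_ext_gt0 (w : R -> R) :
  continuous w -> (forall x, xm <= x -> 0 < w x) ->
  (0 < \int[lebesgue_measure]_(x in `[xm, +oo[) (beta_ext x * w x)%:E)%E.
Proof.
move=> w_cont w_gt0; set f := fun x => beta_ext x * w x.
have f_meas : measurable_fun `[xm, +oo[ (EFin \o f).
  apply: continuous_EFin_measurable => x.
  by apply: cvgM; [exact: continuous_beta_ext|exact: w_cont].
have f_ge0 x : (`[xm, +oo[%classic : set R) x -> (0 <= (f x)%:E)%E.
  rewrite /= in_itv /= andbT => x_ge.
  by rewrite lee_fin mulr_ge0 ?beta_ext_ge0 // ltW // w_gt0.
rewrite lt0e integral_ge0 // andbT; apply/negP => /eqP int_f0.
have [N [N_meas N0 f_ne0_N]] :
    ae_eq lebesgue_measure `[xm, +oo[%classic (EFin \o f) (cst 0%E).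
  apply: (ae_eq_integral_abs lebesgue_measure (measurable_itv _) f_meas).1.
  rewrite -int_f0; apply: eq_integral => x /[!inE] x_ge.
  by rewrite gee0_abs // f_ge0.
have : lebesgue_measure.-negligible `[x0, +oo[%classic.
  apply: negligibleS
    (negligibleU (ex_intro _ N (And3 N_meas N0 f_ne0_N)) beta_gt0_ae).
  move=> x; rewrite /= in_itv /= andbT => x0_le.
  have xm_le : xm <= x := le_trans xm_le_x0 x0_le.
  have [fx0|] := pselect ((`[xm, +oo[%classic : set R) x -> (f x)%:E = 0%E).
    2: by left.
  right; split => //; move: fx0; rewrite /= in_itv /= andbT => /(_ xm_le) /eqP.
  rewrite eqe mulf_eq0 (gt_eqF (w_gt0 _ xm_le)) orbF beta_extE // => /eqP ->.
  exact: lexx.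
move=> /(negligibleP _ _).1.
have := lebesgue_measure_itv `[x0, +oo[; rewrite /= => ->.
by rewrite ltry => /(_ (measurable_itv _)).
Qed.

Lemma Ffun_fin_num b : 0 < b -> Ffun mu xm g beta b \is a fin_num.
Proof.
move=> b_gt0; rewrite ge0_fin_numE.
  by rewrite /Ffun lte_mul_pinfty ?lee_fin ?(ltW b_gt0) ?Rfun_lt_pinfty.
by rewrite FfunE // integral_ge0 // => x _; rewrite lee_fin Ffun_density_ge0.
Qed.

Lemma Ffun_increment b1 b2 : 0 < b1 -> b1 < b2 ->
  Ffun mu xm g beta b2 = (Ffun mu xm g beta b1 +
    \int[lebesgue_measure]_(x in `[xm, +oo[)
      (beta_ext x * (size_weight b2 x - size_weight b1 x))%:E)%E.
Proof.
move=> b1_gt0 b12; have b2_gt0 := lt_trans b1_gt0 b12.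
set dw := fun x => size_weight b2 x - size_weight b1 x.
have dw_cont : continuous dw.
  by move=> x; apply: cvgB; exact: continuous_size_weight.
have m1 : measurable_fun `[xm, +oo[ (fun x => (Ffun_density b1 x)%:E).
  exact: continuous_EFin_measurable (continuous_Ffun_density b1_gt0).
have m2 : measurable_fun `[xm, +oo[ (fun x => (beta_ext x * dw x)%:E).
  apply: continuous_EFin_measurable => x.
  by apply: cvgM; [exact: continuous_beta_ext|exact: dw_cont].
have p1 x : (`[xm, +oo[%classic : set R) x -> (0 <= (Ffun_density b1 x)%:E)%E.
  by move=> _; rewrite lee_fin Ffun_density_ge0.
have p2 x : (`[xm, +oo[%classic : set R) x -> (0 <= (beta_ext x * dw x)%:E)%E.
  rewrite /= in_itv /= andbT => x_ge.
  by rewrite lee_fin mulr_ge0 ?beta_ext_ge0 // subr_ge0 ltW // size_weight_ltr.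
rewrite FfunE // FfunE // -ge0_integralD //.
by apply: eq_integral => x _; rewrite -EFinD /Ffun_density mulrBr addrC subrK.
Qed.

Lemma Ffun_ltr b1 b2 : 0 <= b1 -> b1 < b2 ->
  (Ffun mu xm g beta b1 < Ffun mu xm g beta b2)%E.
Proof.
move=> b1_ge0 b12; have b2_gt0 := le_lt_trans b1_ge0 b12.
case: (eqVneq b1 0) => [->|b1_neq0].
  rewrite {1}/Ffun mul0e FfunE //.
  apply: integral_beta_ext_gt0; first exact: continuous_size_weight.
  by move=> x _; exact: size_weight_gt0.
have b1_gt0 : 0 < b1 by rewrite lt_neqAle eq_sym b1_neq0.
rewrite (Ffun_increment b1_gt0 b12) lteDl ?Ffun_fin_num //.
apply: integral_beta_ext_gt0 => [x|x x_ge].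
  by apply: cvgB; exact: continuous_size_weight.
by rewrite subr_gt0 size_weight_ltr.
Qed.

End SizeDependentRenewal.

Unset Implicit Arguments.
Set Strict Implicit.

Theorem theorem1 (R : realType) (mu xm x0 : R) (g beta : R -> R) :
  0 < mu -> 0 <= xm ->
  (* g : [0,+oo) -> (0,+oo), continuous, strictly decreasing, g(+oo) = 0 *)
  {within `[0%R, +oo[%classic, continuous g} ->
  (forall x, 0 <= x -> 0 < g x) ->
  (forall x y, 0 <= x -> x < y -> g y < g x) ->
  g x @[x --> +oo] --> 0 ->
  (* beta : [xm,+oo) -> [0,+oo), globally Lipschitz *)
  (forall x, xm <= x -> 0 <= beta x) ->
  (exists L : R, forall x y, xm <= x -> xm <= y ->
       `|beta x - beta y| <= L * `|x - y|) ->
  (* beta > 0 a.e. on [x0,+oo) for some x0 >= xm *)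
  xm <= x0 ->
  lebesgue_measure.-negligible [set x | x0 <= x /\ beta x <= 0] ->
  forall b1 b2 : R, 0 <= b1 -> b1 < b2 ->
    (Ffun mu xm g beta b1 < Ffun mu xm g beta b2)%E.
Proof.
move=> mu_gt0 _ g_cont g_gt0 g_decr _ beta_ge0 [L beta_lip] xm_le_x0 beta_gt0_ae.
exact: (Ffun_ltr mu_gt0 g_cont g_gt0 g_decr beta_ge0 beta_lip xm_le_x0 beta_gt0_ae).
Qed.
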